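(* Let $N\ge1$, consider the fuzzy sphere calculus described in the context with basis one-forms $e_k=1\otimes\sigma_k$ and basis two-forms $f_m=\tfrac12\sum_{j,k}\epsilon_{mjk}\,e_j\wedge e_k$, and let $\nabla$ be the connection with $\nabla(e_k)=\sum_je_j\otimes_{A_N}\omega_{jk}$, $\omega_{jk}=-\tfrac12\sum_l\epsilon_{jkl}e_l$. Define its curvature on the basis by $$R_\nabla(e_j)=\sum_k\Big[(\mathrm{id}\otimes\wedge)\big(\nabla(e_k)\otimes_{A_N}\omega_{kj}\big)+e_k\otimes_{A_N}d\omega_{kj}\Big]\in\mathcal{E}\otimes_{A_N}\Omega^2(A_N).$$ Then $$R_\nabla(e_j)=-\tfrac14\sum_{p,q}\epsilon_{jpq}\,e_p\otimes_{A_N}f_q=\tfrac14\sum_pe_p\otimes_{A_N}(e_p\wedge e_j).$$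
   Context: Fuzzy sphere spectral triple: $J_1,J_2,J_3$ basis of $su(2)$ with $[J_k,J_l]=\sum_m\epsilon_{klm}J_m$ ($\epsilon_{123}=1$, totally antisymmetric); $\rho_{n/2}$ the $(n+1)$-dimensional irreducible unitary representation; $K_N=\oplus_{n=0}^N\mathbb{C}^{n+1}$, $X_k=\oplus_{n=0}^N\rho_{n/2}(J_k)$, $A_N=B(K_N)$, $H_N=K_N\otimes\mathbb{C}^2$ with $a\mapsto a\otimes1$, $\sigma_k=\sqrt{-1}\tau_k$ ($\tau_k$ Pauli matrices), $D_N=\sum_kX_k\otimes\sigma_k$. Differential calculus: $\mathcal{E}=\Omega^1(A_N)=\{\sum a_j[D_N,b_j]\}$ (free with basis $e_1,e_2,e_3$), $da=[D_N,a]$; $\Omega^2(A_N)=\mathcal{S}/J^2$ with $\mathcal{S}$ the span of $a_0[D_N,a_1][D_N,a_2]$ and $J^2=\{\sum_j[D_N,a_j][D_N,b_j]:\sum_ja_j[D_N,b_j]=0\}$; $\wedge$ is operator multiplication followed by the quotient; $d(\sum a_j[D_N,b_j])=[\sum_j[D_N,a_j][D_N,b_j]]$. $(\mathrm{id}\otimes\wedge)(x\otimes y\otimes z)=x\otimes(y\wedge z)$. (This $\nabla$ is the Levi-Civita connection of the metric $g(e_k\otimes e_j)=\delta_{kj}$.) *)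

From HB Require Import structures.
From mathcomp Require Import all_boot all_order all_algebra all_field.
From mathcomp Require Import mxtens.
From Stdlib Require Import ClassicalEpsilon.
Set Implicit Arguments. Unset Strict Implicit. Unset Printing Implicit Defensive.
Import Order.TTheory GRing.Theory Num.Theory.
Local Open Scope ring_scope.

Notation C := algC.

(* Levi-Civita symbol on indices 'I_3 (0,1,2 standing for 1,2,3). *)
Definition eps (i j k : 'I_3) : C :=
  if [&& i != j, j != k & i != k] then
    (if val j == ((val i).+1 %% 3)%N then 1 else -1)
  else 0.

(* Spin-n/2 representation rho_{n/2} of su(2) on C^(n+1), basis |m>,
   m = n/2 - a (a = 0..n).  S_+ |m> = sqrt((j-m)(j+m+1)) |m+1>,
   so (S_+)_{a-1,a} = sqrt(a (n+1-a)).  J_k = -i S_k, hence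
   [J_1,J_2] = J_3 (cyclically). *)
Definition Splus (n : nat) : 'M[C]_n.+1 :=
  \matrix_(r, c) (if (val r).+1 == val c
                  then sqrtC ((val c * (n.+1 - val c))%N)%:R else 0).
Definition Sminus (n : nat) : 'M[C]_n.+1 := (Splus n)^T.
Definition Sz (n : nat) : 'M[C]_n.+1 :=
  \matrix_(r, c) (if r == c then (n%:R / 2 - (val r)%:R) else 0).

Definition rho (n : nat) (k : 'I_3) : 'M[C]_n.+1 :=
  match val k with
  | 0%N => (- 'i / 2) *: (Splus n + Sminus n)
  | 1%N => (- 1 / 2) *: (Splus n - Sminus n)
  | _ => (- 'i) *: Sz n
  end.

Definition Kdim (N : nat) : nat := (\sum_(n < N.+1) (n : nat).+1)%N.
Definition X (N : nat) (k : 'I_3) : 'M[C]_(Kdim N) :=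
  mxdiag (fun n : 'I_N.+1 => rho n k).

Definition tau (k : 'I_3) : 'M[C]_2 :=
  match val k with
  | 0%N => \matrix_(r, c) (if r == c then 0 else 1)
  | 1%N => \matrix_(r, c) (if r == c then 0 else if val r == 0%N then - 'i else 'i)
  | _ => \matrix_(r, c) (if r == c then (if val r == 0%N then 1 else -1) else 0)
  end.
Definition sigma (k : 'I_3) : 'M[C]_2 := 'i *: tau k.

Definition Hdim (N : nat) : nat := (Kdim N * 2)%N.
Notation op N := 'M[C]_(Hdim N).

(* representation a |-> a (x) 1 of A_N = B(K_N) *)
Definition emb (N : nat) (a : 'M[C]_(Kdim N)) : op N := a *t (1%:M : 'M[C]_2).

Definition Dirac (N : nat) : op N := \sum_(k < 3) (X N k *t sigma k).

Definition comm (N : nat) (x : op N) : op N := Dirac N *m x - x *m Dirac N.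

Notation Apair N := ('M[C]_(Kdim N) * 'M[C]_(Kdim N))%type.

Definition rep1 (N : nat) (s : seq (Apair N)) : op N :=
  \sum_(p <- s) (emb p.1 *m comm (emb p.2)).
Definition drep (N : nat) (s : seq (Apair N)) : op N :=
  \sum_(p <- s) (comm (emb p.1) *m comm (emb p.2)).

Definition Omega1 (N : nat) (w : op N) : Prop := exists s, w = rep1 s.

(* the space S spanned by a0 [D,a1][D,a2] (scalars absorbed into a0) *)
Definition Sspace (N : nat) (x : op N) : Prop :=
  exists s : seq ('M[C]_(Kdim N) * Apair N),
    x = \sum_(p <- s) (emb p.1 *m comm (emb p.2.1) *m comm (emb p.2.2)).

Definition J2 (N : nat) (x : op N) : Prop :=
  exists s, rep1 s = 0 /\ x = drep s.

(* equality in Omega^2(A_N) = S / J^2 of two representatives in S *)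
Definition eq2 (N : nat) (x y : op N) : Prop :=
  Sspace x /\ Sspace y /\ J2 (x - y).

(* exterior derivative d : Omega^1 -> Omega^2, on a (chosen) representation
   w = sum_j a_j [D,b_j]; well defined modulo J^2. *)
Definition d1 (N : nat) (w : op N) : op N :=
  drep (epsilon (inhabits [::]) (fun s => w = rep1 s)).

(* wedge product: operator multiplication (followed by the quotient) *)
Definition wedge (N : nat) (x y : op N) : op N := x *m y.

Definition e (N : nat) (k : 'I_3) : op N := (1%:M : 'M[C]_(Kdim N)) *t sigma k.

Definition f (N : nat) (m : 'I_3) : op N :=
  (1 / 2) *: \sum_(j < 3) \sum_(k < 3) (eps m j k *: wedge (e N j) (e N k)).

Definition omega (N : nat) (j k : 'I_3) : op N :=
  (- 1 / 2) *: \sum_(l < 3) (eps j k l *: e N l).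

(* Elements of E (x)_{A_N} F, E free with central basis e_1,e_2,e_3, are
   written uniquely as sum_i e_i (x) y_i; we represent them by their
   coefficient families i |-> y_i. *)

(* nabla(e_k) = sum_j e_j (x) omega_{jk}: coefficient of e_i *)
Definition nabla (N : nat) (k : 'I_3) (i : 'I_3) : op N := omega N i k.

(* R(e_j) = sum_k [ (id (x) wedge)(nabla(e_k) (x) omega_{kj}) + e_k (x) d omega_{kj} ],
   coefficient of e_i. *)
Definition curv (N : nat) (j : 'I_3) (i : 'I_3) : op N :=
  \sum_(k < 3) (wedge (nabla N k i) (omega N k j)
                + (if k == i then d1 (omega N k j) else 0)).

From mathcomp Require Import all_boot all_algebra all_field ring.
From mathcomp Require Import mxtens.
From Stdlib Require Import ClassicalEpsilon.
Set Implicit Arguments. Unset Strict Implicit. Unset Printing Implicit Defensive.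
Import GRing.Theory Num.Theory.
Local Open Scope ring_scope.

(* By the su(2)
   relations D^2 + D = emb C, with C = - sum_k X_k^2 the Casimir, so that
   [D,a][D,b] = D w + w D + w - a [C,b] for w = a [D,b]: modulo emb(A_N),
   d w is D w + w D + w.  Moreover D e_k + e_k D = - 2 X_k (x) 1 lies in emb(A_N).
   Explicit pairs of operators hopping between the spin-0 and the spin-1/2
   blocks of K_N (this is where N >= 1 is used) show that emb P0 lies in J^2 and
   P0 (x) sigma_k is a one-form, for P0 the rank-one projection onto the spin-0
   block; as P0 generates A_N as a bimodule, emb(A_N) is contained in J^2 and
   every e_k is a one-form.  Hence d w = w modulo J^2 on the span of the e_k,
   every 1 (x) A lies in S, and every scalar 1 (x) c lies in J^2.  Both
   identities thus reduce to identities between 2x2 matrices that hold up to a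
   scalar, checked on the coordinates in the quaternion basis 1, sigma_k. *)

Section TensorBilinear.
Variables (R : comPzRingType) (m n p q : nat).
Implicit Types (A B : 'M[R]_(m, n)) (K L : 'M[R]_(p, q)).

Lemma tensmxDl A B K : (A + B) *t K = A *t K + B *t K.
Proof. by apply/matrixP=> i j; rewrite !mxE mulrDl. Qed.
Lemma tensmxDr A K L : A *t (K + L) = A *t K + A *t L.
Proof. by apply/matrixP=> i j; rewrite !mxE mulrDr. Qed.
Lemma tensmxZl c A K : (c *: A) *t K = c *: (A *t K).
Proof. by apply/matrixP=> i j; rewrite !mxE mulrA. Qed.
Lemma tensmxZr c A K : A *t (c *: K) = c *: (A *t K).
Proof. by apply/matrixP=> i j; rewrite !mxE mulrCA. Qed.
Lemma tensmxNl A K : (- A) *t K = - (A *t K).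
Proof. by rewrite -scaleN1r tensmxZl scaleN1r. Qed.
Lemma tensmxNr A K : A *t (- K) = - (A *t K).
Proof. by rewrite -scaleN1r tensmxZr scaleN1r. Qed.
Lemma tensmxBl A B K : (A - B) *t K = A *t K - B *t K.
Proof. by rewrite tensmxDl tensmxNl. Qed.
Lemma tensmxBr A K L : A *t (K - L) = A *t K - A *t L.
Proof. by rewrite tensmxDr tensmxNr. Qed.
Lemma tensmx_suml I (r : seq I) (P : pred I) (F : I -> 'M[R]_(m, n)) K :
  (\sum_(i <- r | P i) F i) *t K = \sum_(i <- r | P i) (F i *t K).
Proof. by elim/big_rec2: _ => [|i x y _ <-]; rewrite ?tens0mx ?tensmxDl. Qed.
Lemma tensmx_sumr I (r : seq I) (P : pred I) (F : I -> 'M[R]_(p, q)) A :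
  A *t (\sum_(i <- r | P i) F i) = \sum_(i <- r | P i) (A *t F i).
Proof. by elim/big_rec2: _ => [|i x y _ <-]; rewrite ?tensmx0 ?tensmxDr. Qed.

End TensorBilinear.

Lemma tensmx11 (R : comPzRingType) (m n : nat) :
  (1%:M : 'M[R]_m) *t (1%:M : 'M[R]_n) = 1%:M.
Proof.
apply/matrixP=> i j.
case: (mxtens_indexP i)=> i0 i1; case: (mxtens_indexP j)=> j0 j1.
rewrite tensmxE !mxE (can_eq (@mxtens_indexK m n)) xpair_eqE.
by case: (i0 == j0); case: (i1 == j1); rewrite ?mulr1 ?mulr0.
Qed.

Section LieBracket.
Variables (R : comPzRingType) (n : nat).
Definition lie (U V : 'M[R]_n) := U *m V - V *m U.
Implicit Types U V W : 'M[R]_n.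

Lemma lieDl U V W : lie (U + V) W = lie U W + lie V W.
Proof. by rewrite /lie mulmxDl mulmxDr opprD addrACA. Qed.
Lemma lieDr U V W : lie U (V + W) = lie U V + lie U W.
Proof. by rewrite /lie mulmxDl mulmxDr opprD addrACA. Qed.
Lemma lieNr U V : lie U (- V) = - lie U V.
Proof. by rewrite /lie mulmxN mulNmx opprB opprK addrC. Qed.
Lemma lieNl U V : lie (- U) V = - lie U V.
Proof. by rewrite /lie mulmxN mulNmx opprB opprK addrC. Qed.
Lemma lieBl U V W : lie (U - V) W = lie U W - lie V W.
Proof. by rewrite lieDl lieNl. Qed.
Lemma lieBr U V W : lie U (V - W) = lie U V - lie U W.
Proof. by rewrite lieDr lieNr. Qed.
Lemma lieZl a U V : lie (a *: U) V = a *: lie U V.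
Proof. by rewrite /lie scalerBr -scalemxAl -scalemxAr. Qed.
Lemma lieZr a U V : lie U (a *: V) = a *: lie U V.
Proof. by rewrite /lie scalerBr -scalemxAl -scalemxAr. Qed.
Lemma lieC U V : lie V U = - lie U V.
Proof. by rewrite /lie opprB. Qed.
Lemma liexx U : lie U U = 0.
Proof. by rewrite /lie subrr. Qed.
Lemma lie_mulr U V W : lie U (V *m W) = lie U V *m W + V *m lie U W.
Proof. by rewrite /lie mulmxBl mulmxBr !mulmxA addrA subrK. Qed.
Lemma lie_sumr U I (r : seq I) (P : pred I) (F : I -> 'M[R]_n) :
  lie U (\sum_(i <- r | P i) F i) = \sum_(i <- r | P i) lie U (F i).
Proof.
by elim/big_rec2: _ => [|i x y _ <-]; rewrite ?lieDr // /lie mulmx0 mul0mx subrr.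
Qed.

End LieBracket.

Section Representation.
Variable N : nat.
Implicit Types (a b : 'M[C]_(Kdim N)) (x y : op N).

Lemma embM a b : emb (a *m b) = emb a *m emb b.
Proof. by rewrite /emb tensmx_mul mulmx1. Qed.
Lemma embN a : emb (- a) = - emb a.
Proof. exact: tensmxNl. Qed.
Lemma embB a b : emb (a - b) = emb a - emb b.
Proof. exact: tensmxBl. Qed.
Lemma emb_lie a b : emb (lie a b) = lie (emb a) (emb b).
Proof. by rewrite /lie embB !embM. Qed.
Lemma embZ c a : emb (c *: a) = c *: emb a.
Proof. exact: tensmxZl. Qed.
Lemma emb1 : emb (1%:M : 'M[C]_(Kdim N)) = 1%:M.
Proof. exact: tensmx11. Qed.
Lemma emb_sum I (r : seq I) (P : pred I) (F : I -> 'M[C]_(Kdim N)) :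
  emb (\sum_(i <- r | P i) F i) = \sum_(i <- r | P i) emb (F i).
Proof. exact: tensmx_suml. Qed.

Lemma commN x : comm (- x) = - comm x.
Proof. exact: lieNr. Qed.
Lemma commM x y : comm (x *m y) = comm x *m y + x *m comm y.
Proof. exact: lie_mulr. Qed.
Lemma comm_sum I (r : seq I) (P : pred I) (F : I -> op N) :
  comm (\sum_(i <- r | P i) F i) = \sum_(i <- r | P i) comm (F i).
Proof. exact: lie_sumr. Qed.

End Representation.

Section Bimodules.
Variable N : nat.
Implicit Types (s : seq (Apair N)) (x y : op N) (a b : 'M[C]_(Kdim N)).

Lemma rep1_cat s1 s2 : rep1 (s1 ++ s2) = rep1 s1 + rep1 s2.
Proof. exact: big_cat. Qed.
Lemma drep_cat s1 s2 : drep (s1 ++ s2) = drep s1 + drep s2.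
Proof. exact: big_cat. Qed.

Definition pairs_mull a s := [seq (a *m p.1, p.2) | p <- s].

Lemma rep1_mull a s : rep1 (pairs_mull a s) = emb a *m rep1 s.
Proof.
rewrite /rep1 big_map mulmx_sumr; apply: eq_bigr => p _.
by rewrite embM mulmxA.
Qed.
Lemma drep_mull a s :
  drep (pairs_mull a s) = comm (emb a) *m rep1 s + emb a *m drep s.
Proof.
rewrite /drep /rep1 big_map !mulmx_sumr -big_split; apply: eq_bigr => p _ /=.
by rewrite embM commM mulmxDl !mulmxA.
Qed.

(* By the Leibniz rule, a [D, c] b = a [D, c b] - (a c) [D, b]. *)
Definition pairs_mulr s b :=
  [seq (p.1, p.2 *m b) | p <- s] ++ [:: (- \sum_(p <- s) p.1 *m p.2, b)].

Lemma rep1_mulr s b : rep1 (pairs_mulr s b) = rep1 s *m emb b.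
Proof.
rewrite rep1_cat /rep1 big_map big_cons big_nil addr0 /= embN emb_sum.
rewrite mulNmx !mulmx_suml -sumrB; apply: eq_bigr => p _.
by rewrite !embM commM mulmxDr !mulmxA addrK.
Qed.
Lemma drep_mulr s b :
  drep (pairs_mulr s b) = drep s *m emb b - rep1 s *m comm (emb b).
Proof.
rewrite drep_cat /drep /rep1 big_map big_cons big_nil addr0 /=.
rewrite embN commN emb_sum comm_sum mulNmx !mulmx_suml -!sumrB.
apply: eq_bigr => p _; rewrite !embM !commM.
set A := comm (emb p.1); set B := comm (emb p.2); set E := comm (emb b).
by rewrite (mulmxDr A) (mulmxDl _ _ E) !mulmxA opprD addrA addrK.
Qed.

Lemma J2_0 : J2 (0 : op N).
Proof. by exists [::]; rewrite /rep1 /drep !big_nil. Qed.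
Lemma J2D x y : J2 x -> J2 y -> J2 (x + y).
Proof.
move=> [s1 [h1 ->]] [s2 [h2 ->]]; exists (s1 ++ s2).
by rewrite rep1_cat drep_cat h1 h2 addr0.
Qed.
Lemma J2_mull a x : J2 x -> J2 (emb a *m x).
Proof.
move=> [s [h ->]]; exists (pairs_mull a s).
by rewrite rep1_mull drep_mull h !mulmx0 add0r.
Qed.
Lemma J2_mulr x b : J2 x -> J2 (x *m emb b).
Proof.
move=> [s [h ->]]; exists (pairs_mulr s b).
by rewrite rep1_mulr drep_mulr h !mul0mx subr0.
Qed.
Lemma J2Z c x : J2 x -> J2 (c *: x).
Proof.
by move=> /(J2_mull c%:M); rewrite -scalemx1 embZ emb1 -scalemxAl mul1mx.
Qed.
Lemma J2N x : J2 x -> J2 (- x).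
Proof. by rewrite -scaleN1r; apply: J2Z. Qed.
Lemma J2_sum I (r : seq I) (P : pred I) (F : I -> op N) :
  (forall i, P i -> J2 (F i)) -> J2 (\sum_(i <- r | P i) F i).
Proof. by move=> h; elim/big_ind: _ => //; [exact: J2_0 | exact: J2D]. Qed.

Lemma Omega1_0 : Omega1 (0 : op N).
Proof. by exists [::]; rewrite /rep1 big_nil. Qed.
Lemma Omega1D x y : Omega1 x -> Omega1 y -> Omega1 (x + y).
Proof. by move=> [s1 ->] [s2 ->]; exists (s1 ++ s2); rewrite rep1_cat. Qed.
Lemma Omega1_mull a x : Omega1 x -> Omega1 (emb a *m x).
Proof. by move=> [s ->]; exists (pairs_mull a s); rewrite rep1_mull. Qed.
Lemma Omega1_mulr x b : Omega1 x -> Omega1 (x *m emb b).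
Proof. by move=> [s ->]; exists (pairs_mulr s b); rewrite rep1_mulr. Qed.
Lemma Omega1Z c x : Omega1 x -> Omega1 (c *: x).
Proof.
by move=> /(Omega1_mull c%:M); rewrite -scalemx1 embZ emb1 -scalemxAl mul1mx.
Qed.
Lemma Omega1_sum I (r : seq I) (P : pred I) (F : I -> op N) :
  (forall i, P i -> Omega1 (F i)) -> Omega1 (\sum_(i <- r | P i) F i).
Proof. by move=> h; elim/big_ind: _ => //; [exact: Omega1_0 | exact: Omega1D]. Qed.

Lemma Sspace0 : Sspace (0 : op N).
Proof. by exists [::]; rewrite big_nil. Qed.
Lemma SspaceD x y : Sspace x -> Sspace y -> Sspace (x + y).
Proof. by move=> [s1 ->] [s2 ->]; exists (s1 ++ s2); rewrite big_cat. Qed.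
Lemma SspaceZ c x : Sspace x -> Sspace (c *: x).
Proof.
move=> [s ->]; exists [seq (c *: p.1, p.2) | p <- s].
rewrite big_map scaler_sumr; apply: eq_bigr => p _.
by rewrite embZ -!scalemxAl.
Qed.
Lemma SspaceN x : Sspace x -> Sspace (- x).
Proof. by rewrite -scaleN1r; apply: SspaceZ. Qed.
Lemma Sspace_sum I (r : seq I) (P : pred I) (F : I -> op N) :
  (forall i, P i -> Sspace (F i)) -> Sspace (\sum_(i <- r | P i) F i).
Proof. by move=> h; elim/big_ind: _ => //; [exact: Sspace0 | exact: SspaceD]. Qed.
Lemma Sspace_drep s : Sspace (drep s).
Proof.
exists [seq (1%:M, p) | p <- s]; rewrite big_map; apply: eq_bigr => -[a b] _ /=.
by rewrite emb1 mul1mx.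
Qed.
Lemma Sspace_J2 x : J2 x -> Sspace x.
Proof. by move=> [s [_ ->]]; apply: Sspace_drep. Qed.

Lemma d1P x : Omega1 x -> exists s, x = rep1 s /\ d1 x = drep s.
Proof.
move=> /(epsilon_spec (inhabits [::]) (fun s => x = rep1 s)) xE.
by eexists; split; [exact: xE | reflexivity].
Qed.

End Bimodules.

Lemma sum_ord3 (V : nmodType) (F : 'I_3 -> V) :
  \sum_(i < 3) F i = F (@Ordinal 3 0 isT) + F (@Ordinal 3 1 isT) + F (@Ordinal 3 2 isT).
Proof.
rewrite !big_ord_recr big_ord0 /= add0r.
by congr (F _ + F _ + F _); apply: val_inj.
Qed.

Ltac mx2_entrywise :=
  apply/matrixP; case=> [[|[|//]] ?]; case=> [[|[|//]] ?];
  rewrite ?(mxE, summxE, big_ord_recr, big_ord0) /= ?mxE /= /eps /=; ring: (mulCii C).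

Lemma sigma_mul k l : sigma k *m sigma l =
  - (k == l)%:R *: 1%:M - \sum_m eps k l m *: sigma m.
Proof. by case: k => [[|[|[|//]]] ?]; case: l => [[|[|[|//]]] ?]; mx2_entrywise. Qed.

Lemma eps_diag i k : eps i i k = 0.
Proof. by rewrite /eps eqxx. Qed.

Lemma sigma_sq k : sigma k *m sigma k = - 1%:M.
Proof.
rewrite sigma_mul eqxx big1 ?subr0 ?scaleN1r ?scale1r // => m _.
by rewrite eps_diag scale0r.
Qed.

Lemma sigma_anticomm k l :
  sigma k *m sigma l + sigma l *m sigma k = (- 2 * (k == l)%:R) *: 1%:M.
Proof. by case: k => [[|[|[|//]]] ?]; case: l => [[|[|[|//]]] ?]; mx2_entrywise. Qed.

Section SpinRepresentation.
Variable n : nat.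

Lemma SzE : Sz n = diag_mx (\row_(r < n.+1) (n%:R / 2 - (val r)%:R)).
Proof. by apply/matrixP => r c; rewrite !mxE; case: (r == c); rewrite ?mulr1n ?mulr0n. Qed.

Lemma Sz_Splus : lie (Sz n) (Splus n) = Splus n.
Proof.
rewrite /lie SzE mul_diag_mx mul_mx_diag; apply/matrixP => r c; rewrite !mxE.
by case: eqP => [<-|_]; rewrite ?mulr0 ?mul0r ?subr0 // mulrSr; ring.
Qed.

Lemma Sz_Sminus : lie (Sz n) (Sminus n) = - Sminus n.
Proof.
rewrite /lie SzE mul_diag_mx mul_mx_diag; apply/matrixP => r c; rewrite !mxE.
by case: eqP => [<-|_]; rewrite ?mulr0 ?mul0r ?subr0 ?oppr0 // mulrSr; ring.
Qed.

(* Both products are diagonal with entries sqrtC(m (n+1-m))^2, so no square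
   root survives. *)
Lemma Splus_Sminus : lie (Splus n) (Sminus n) = 2%:R *: Sz n.
Proof.
pose s (m : nat) : C := sqrtC (m * (n.+1 - m))%:R.
have s_sq m : s m ^+ 2 = (m * (n.+1 - m))%:R by rewrite sqrtCK.
have PM : Splus n *m Sminus n = \matrix_(r, c) ((r == c)%:R * s r.+1 ^+ 2).
  apply/matrixP => r c; rewrite [in RHS]mxE mxE; under eq_bigr do rewrite !mxE.
  have [<-|neq] := eqVneq r c; last first.
    rewrite mul0r big1 // => j _.
    case: eqP => [rj|]; last by rewrite mul0r.
    case: eqP => [cj|]; last by rewrite mulr0.
    by case/eqP: neq; apply/val_inj/succn_inj; rewrite rj cj.
  rewrite mul1r (eq_bigr (fun j : 'I_n.+1 => if (j : nat) == r.+1 then s j ^+ 2 else 0)).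
    rewrite -big_mkcond (big_ord1_eq _ (fun m => s m ^+ 2)); case: ltnP => // r_ge.
    have -> : r.+1 = n.+1 by apply/eqP; rewrite eqn_leq r_ge ltn_ord.
    by rewrite s_sq subnn muln0.
  by move=> j _; rewrite eq_sym; case: eqP; rewrite ?expr2 ?mul0r.
have MP : Sminus n *m Splus n = \matrix_(r, c) ((r == c)%:R * s r ^+ 2).
  apply/matrixP => r c; rewrite [in RHS]mxE mxE; under eq_bigr do rewrite !mxE.
  have [<-|neq] := eqVneq r c; last first.
    rewrite mul0r big1 // => j _.
    case: eqP => [jr|]; last by rewrite mul0r.
    case: eqP => [jc|]; last by rewrite mulr0.
    by case/eqP: neq; apply/val_inj/succn_inj; rewrite -jr -jc.
  rewrite mul1r; case: r => [[|r] r_lt] /=.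
    by rewrite big1 ?s_sq ?mul0n // => j _; rewrite mul0r.
  rewrite (eq_bigr (fun j : 'I_n.+1 => if (j : nat) == r then s r.+1 ^+ 2 else 0)).
    by rewrite -big_mkcond (big_ord1_eq _ (fun=> s r.+1 ^+ 2)) ltnW.
  by move=> j _; rewrite eqSS; case: eqP; rewrite ?expr2 ?mul0r.
apply/matrixP => r c; rewrite /lie PM MP !mxE.
case: (r == c); last by rewrite !mul0r subrr mulr0.
have r_le : (r <= n)%N by rewrite -ltnS.
rewrite !s_sq !mul1r subSS !natrM !natrB ?(leqW r_le) // [in RHS]mulrBr [in RHS]mulrCA.
by rewrite divff ?pnatr_eq0 // mulrS; ring.
Qed.
End SpinRepresentation.

Section SU2.
Variable n : nat.
Let J_1 := rho n (@Ordinal 3 0 isT).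
Let J_2 := rho n (@Ordinal 3 1 isT).
Let J_3 := rho n (@Ordinal 3 2 isT).

Lemma rho_lie12 : lie J_1 J_2 = J_3.
Proof.
rewrite /J_1 /J_2 /J_3 /rho /= lieZl lieZr lieDl !lieBr !liexx.
rewrite (lieC (Splus n) (Sminus n)) Splus_Sminus.
by move: (Sz n) => Z; apply/matrixP => r c; rewrite !mxE; field: (mulCii C).
Qed.
Lemma rho_lie23 : lie J_2 J_3 = J_1.
Proof.
rewrite /J_1 /J_2 /J_3 /rho /= lieZl lieZr lieBl.
rewrite (lieC (Sz n) (Splus n)) (lieC (Sz n) (Sminus n)) Sz_Splus Sz_Sminus.
move: (Sz n) (Splus n) (Sminus n) => Z P M.
by apply/matrixP => r c; rewrite !mxE; field: (mulCii C).
Qed.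
Lemma rho_lie31 : lie J_3 J_1 = J_2.
Proof.
rewrite /J_1 /J_2 /J_3 /rho /= lieZl lieZr lieDr Sz_Splus Sz_Sminus.
move: (Sz n) (Splus n) (Sminus n) => Z P M.
by apply/matrixP => r c; rewrite !mxE; field: (mulCii C).
Qed.
End SU2.

Lemma mxdiag_mul (R : pzSemiRingType) (p : nat) (p_ : 'I_p -> nat)
    (A B : forall i, 'M[R]_(p_ i)) :
  mxdiag A *m mxdiag B = mxdiag (fun i => A i *m B i).
Proof.
rewrite {1}/mxdiag mul_mxblock_mxdiag /mxdiag; apply: eq_mxblock => i j.
by case: eqVneq => [<-|_]; rewrite ?mul0mx // !conform_mx_id.
Qed.

Lemma X_lie N k l m :
  (forall n, lie (rho n k) (rho n l) = rho n m) -> lie (X N k) (X N l) = X N m.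
Proof.
by move=> h; rewrite /lie /X !mxdiag_mul -mxdiagB; apply: eq_mxdiag => i; apply: h.
Qed.

Lemma sum_eps_mulX N l :
  \sum_k \sum_m eps k m l *: (X N k *m X N m) = X N l.
Proof.
have r12 := X_lie N (rho_lie12); have r23 := X_lie N (rho_lie23).
have r31 := X_lie N (rho_lie31).
move: (X N) r12 r23 r31 => Y r12 r23 r31.
rewrite !sum_ord3; case: l => [[|[|[|//]]] l_lt];
  rewrite /eps /= ?scale0r ?scale1r ?scaleN1r ?add0r ?addr0.
- have -> : Ordinal l_lt = @Ordinal 3 0 isT by apply: val_inj.
  by rewrite -r23.
- have -> : Ordinal l_lt = @Ordinal 3 1 isT by apply: val_inj.
  by rewrite -r31 /lie addrC.
- have -> : Ordinal l_lt = @Ordinal 3 2 isT by apply: val_inj.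
  by rewrite -r12.
Qed.

Definition casimir N : 'M[C]_(Kdim N) := - \sum_k X N k *m X N k.

(* In D^2 = sum_(k,m) X_k X_m (x) sigma_k sigma_m, the symmetric part of
   sigma_k sigma_m gives the Casimir and the antisymmetric part gives - D. *)
Lemma Dirac_sq N : Dirac N *m Dirac N = emb (casimir N) - Dirac N.
Proof.
have termE k m : (X N k *t sigma k) *m (X N m *t sigma m) =
    - ((k == m)%:R *: (X N k *m X N m *t 1%:M))
    - \sum_l ((eps k m l *: (X N k *m X N m)) *t sigma l).
  rewrite tensmx_mul sigma_mul tensmxBr tensmxZr tensmx_sumr scaleNr.
  by congr (_ - _); apply: eq_bigr => l _; rewrite tensmxZr tensmxZl.
rewrite /Dirac mulmx_suml.
under eq_bigr do rewrite mulmx_sumr.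
under eq_bigr do under eq_bigr do rewrite termE.
under eq_bigr do rewrite sumrB.
rewrite sumrB; congr (_ - _).
  rewrite /emb /casimir tensmxNl tensmx_suml -sumrN; apply: eq_bigr => k _.
  rewrite sumrN (bigD1 k) //= eqxx scale1r big1 ?addr0 // => m /negPf.
  by rewrite eq_sym => ->; rewrite scale0r.
under eq_bigr do rewrite exchange_big.
rewrite exchange_big; apply: eq_bigr => l _.
rewrite -(sum_eps_mulX N l) tensmx_suml; apply: eq_bigr => k _.
by rewrite tensmx_suml.
Qed.

Lemma lie_mul_lie (R : comPzRingType) n (d x y : 'M[R]_n) :
  lie d x *m lie d y = d *m (x *m lie d y) + x *m lie d y *m d - x *m lie (d *m d) y.
Proof.
rewrite /lie !(mulmxBl, mulmxBr) !mulmxA.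
by rewrite [in RHS]opprB -[in RHS]addrA subrKA opprB.
Qed.

Lemma comm_mul_comm N a b :
  comm (emb a) *m comm (emb b) =
  Dirac N *m (emb a *m comm (emb b)) + emb a *m comm (emb b) *m Dirac N
  + emb a *m comm (emb b) - emb (a *m lie (casimir N) b).
Proof.
have DDb : lie (Dirac N *m Dirac N) (emb b) = emb (lie (casimir N) b) - comm (emb b).
  by rewrite Dirac_sq lieBl emb_lie.
by rewrite [LHS]lie_mul_lie DDb [emb a *m (emb _ - _)]mulmxBr -embM opprB addrA.
Qed.

Lemma drep_Dirac N (s : seq (Apair N)) :
  drep s = Dirac N *m rep1 s + rep1 s *m Dirac N + rep1 s
           - emb (\sum_(p <- s) p.1 *m lie (casimir N) p.2).
Proof.
rewrite /drep /rep1 mulmx_sumr mulmx_suml emb_sum -!big_split -sumrB /=.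
by apply: eq_bigr => -[a b] _; apply: comm_mul_comm.
Qed.

Section PauliComponents.
Variable N : nat.
Implicit Types a b : 'M[C]_(Kdim N).

Lemma comm_emb a : comm (emb a) = \sum_k lie (X N k) a *t sigma k.
Proof.
rewrite /comm /lie /Dirac /emb mulmx_suml mulmx_sumr -sumrB; apply: eq_bigr => k _.
by rewrite !tensmx_mul mulmx1 mul1mx tensmxBl.
Qed.

Lemma emb_mul_comm a b :
  emb a *m comm (emb b) = \sum_k (a *m lie (X N k) b) *t sigma k.
Proof.
rewrite comm_emb mulmx_sumr; apply: eq_bigr => k _.
by rewrite /emb tensmx_mul mul1mx.
Qed.

Lemma comm_mul_comm_emb a b : comm (emb a) *m comm (emb b) =
  \sum_k \sum_m (lie (X N k) a *m lie (X N m) b) *t (sigma k *m sigma m).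
Proof.
rewrite !comm_emb mulmx_suml; apply: eq_bigr => k _.
by rewrite mulmx_sumr; apply: eq_bigr => m _; rewrite tensmx_mul.
Qed.

End PauliComponents.

Section Summand.
Variables (R : pzRingType) (p : nat) (p_ : 'I_p -> nat).

Definition summand (i : 'I_p) : 'M[R]_(\sum_j p_ j, p_ i) :=
  \mxcol_j (if j == i then conform_mx 0 (1%:M : 'M[R]_(p_ i)) else 0).

Lemma mxdiag_summand (B : forall j, 'M[R]_(p_ j)) i :
  mxdiag B *m summand i = summand i *m B i.
Proof.
rewrite /summand mul_mxdiag_mxcol mxcol_mul; apply: eq_mxcol => j.
by case: eqVneq => [->|_]; rewrite ?mulmx0 ?mul0mx // !conform_mx_id mulmx1 mul1mx.
Qed.

Lemma summandT_mxdiag (B : forall j, 'M[R]_(p_ j)) i :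
  (summand i)^T *m mxdiag B = B i *m (summand i)^T.
Proof.
rewrite /summand tr_mxcol mul_mxrow_mxdiag mul_mxrow; apply: eq_mxrow => j.
case: eqVneq => [->|_]; last by rewrite linear0 mul0mx mulmx0.
by rewrite !conform_mx_id trmx1 mulmx1 mul1mx.
Qed.

Lemma summandK i : (summand i)^T *m summand i = 1%:M.
Proof.
rewrite /summand tr_mxcol mul_mxrow_mxcol (bigD1 i) //= eqxx conform_mx_id trmx1.
by rewrite mulmx1 big1 ?addr0 // => j /negPf ->; rewrite mulmx0.
Qed.

End Summand.

Definition spin_summand N (n : 'I_N.+1) : 'M[C]_(Kdim N, n.+1) :=
  @summand C _ (fun i : 'I_N.+1 => (i : nat).+1) n.

Lemma rho0 k : rho 0 k = 0.
Proof.
apply/matrixP => r c; rewrite !ord1 /rho.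
case: k => [[|[|[|//]]] ?] /=; rewrite !mxE /= ?mxE /=; by field.
Qed.

Lemma tr_rho1 k : \tr (rho 1 k) = 0.
Proof.
rewrite /mxtrace; case: k => [[|[|[|//]]] ?] /=;
  rewrite ?(mxE, big_ord_recr, big_ord0) /= ?mxE /= ?mulr1n ?sqrtC1; by field.
Qed.

Lemma tr_rho1_mul k m : \tr (rho 1 k *m rho 1 m) = - (k == m)%:R / 2.
Proof.
rewrite /mxtrace; case: k => [[|[|[|//]]] ?]; case: m => [[|[|[|//]]] ?] /=;
  rewrite ?(mxE, big_ord_recr, big_ord0) /= ?mxE /= ?mulr1n ?sqrtC1; by field: (mulCii C).
Qed.

Lemma sum_delta_mx2 (G : 'M[C]_2) :
  \sum_(x < 2) (delta_mx 0 x : 'rV_2) *m G *m (delta_mx x 0 : 'cV_2) = (\tr G)%:M.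
Proof.
apply/matrixP => i j; rewrite !ord1 /mxtrace.
by rewrite ?(mxE, summxE, big_ord_recr, big_ord0) /= ?mxE /=; ring.
Qed.

Lemma X_spin_summand N k (n : 'I_N.+1) :
  X N k *m spin_summand n = spin_summand n *m rho n k.
Proof. exact: mxdiag_summand. Qed.
Lemma spin_summandT_X N k (n : 'I_N.+1) :
  (spin_summand n)^T *m X N k = rho n k *m (spin_summand n)^T.
Proof. exact: summandT_mxdiag. Qed.
Lemma spin_summandK N (n : 'I_N.+1) : (spin_summand n)^T *m spin_summand n = 1%:M.
Proof. exact: summandK. Qed.

Section LowSpins.
Variable M : nat.
Local Notation N := M.+1.
Implicit Types k l : 'I_3.

Definition V0 : 'M[C]_(Kdim N, 1) := spin_summand ord0.
Definition V1 : 'M[C]_(Kdim N, 2) := spin_summand (@Ordinal N.+1 1 isT).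
Definition P0 : 'M[C]_(Kdim N) := V0 *m V0^T.

Lemma X_V0 k : X N k *m V0 = 0.
Proof. by rewrite /V0 (X_spin_summand k ord0) rho0 mulmx0. Qed.
Lemma V0T_X k : V0^T *m X N k = 0.
Proof. by rewrite /V0 (spin_summandT_X k ord0) rho0 mul0mx. Qed.
Lemma X_V1 k : X N k *m V1 = V1 *m rho 1 k.
Proof. exact: (X_spin_summand k (@Ordinal N.+1 1 isT)). Qed.
Lemma V1T_X k : V1^T *m X N k = rho 1 k *m V1^T.
Proof. exact: (spin_summandT_X k (@Ordinal N.+1 1 isT)). Qed.

Lemma V1K : V1^T *m V1 = 1%:M.
Proof. exact: (spin_summandK (@Ordinal N.+1 1 isT)). Qed.
Lemma V0K : V0^T *m V0 = 1%:M.
Proof. exact: (spin_summandK ord0). Qed.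

Lemma mulmx_through_V1 (A : 'M[C]_(1, 2)) (B : 'M[C]_(2, 1)) :
  V0 *m A *m V1^T *m (V1 *m B *m V0^T) = V0 *m (A *m B) *m V0^T.
Proof. by rewrite !mulmxA -[_ *m V1^T *m V1]mulmxA V1K mulmx1. Qed.

Section Hops.
Variables (r : 'rV[C]_2) (q : 'cV[C]_2) (Y : 'M[C]_2).

Definition hop01 := V0 *m r *m V1^T.
Definition hop10 := V1 *m Y *m q *m V0^T.

Lemma lie_X_hop01 k : lie (X N k) hop01 = - (V0 *m (r *m rho 1 k) *m V1^T).
Proof. by rewrite /lie /hop01 !mulmxA X_V0 !mul0mx sub0r -!mulmxA V1T_X. Qed.
Lemma lie_X_hop10 k : lie (X N k) hop10 = V1 *m (rho 1 k *m Y *m q) *m V0^T.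
Proof. by rewrite /lie /hop10 -!mulmxA V0T_X !mulmx0 subr0 !mulmxA X_V1. Qed.

Lemma emb_hop_comm : emb hop01 *m comm (emb hop10) =
  \sum_k (V0 *m (r *m rho 1 k *m Y *m q) *m V0^T) *t sigma k.
Proof.
rewrite emb_mul_comm; apply: eq_bigr => k _.
by rewrite lie_X_hop10 mulmx_through_V1 !mulmxA.
Qed.

Lemma comm_hop_comm : comm (emb hop01) *m comm (emb hop10) =
  \sum_k \sum_m (- (V0 *m (r *m rho 1 k *m rho 1 m *m Y *m q) *m V0^T))
                   *t (sigma k *m sigma m).
Proof.
rewrite comm_mul_comm_emb; apply: eq_bigr => k _; apply: eq_bigr => m _.
by rewrite lie_X_hop01 lie_X_hop10 mulNmx mulmx_through_V1 !mulmxA.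
Qed.

End Hops.

Lemma sum_V0_trace (G : 'M[C]_2) :
  \sum_(x < 2) V0 *m ((delta_mx 0 x : 'rV_2) *m G *m delta_mx x 0) *m V0^T
  = \tr G *: P0.
Proof.
by rewrite -mulmx_suml -mulmx_sumr sum_delta_mx2 mul_mx_scalar scalemxAl.
Qed.

(* Spin-0 to spin-1/2 round trips whose one-form vanishes (tr rho_1(k) = 0)
   while their differential is a nonzero multiple of P0 (tr rho_1(k)^2 /= 0). *)
Definition junk_P0 : seq (Apair N) :=
  [seq (hop01 (delta_mx 0 x), hop10 (delta_mx x 0) 1%:M) | x <- index_enum 'I_2].

Lemma rep1_junk_P0 : rep1 junk_P0 = 0.
Proof.
rewrite /rep1 big_map; under eq_bigr do rewrite emb_hop_comm.
rewrite exchange_big big1 // => k _; rewrite -tensmx_suml.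
under eq_bigr do rewrite mulmx1.
by rewrite sum_V0_trace tr_rho1 scale0r tens0mx.
Qed.

Lemma drep_junk_P0 : drep junk_P0 = (-3/2) *: emb P0.
Proof.
rewrite /drep big_map; under eq_bigr do rewrite comm_hop_comm.
rewrite exchange_big /=; under eq_bigr do rewrite exchange_big /=.
have termE k m : \sum_(x < 2) (- (V0 *m (delta_mx 0 x *m rho 1 k *m rho 1 m *m 1%:M
      *m delta_mx x 0) *m V0^T)) *t (sigma k *m sigma m)
    = ((k == m)%:R / 2) *: (P0 *t (sigma k *m sigma m)).
  rewrite -tensmx_suml sumrN; under eq_bigr do rewrite mulmx1 -(mulmxA (delta_mx 0 _)).
  by rewrite sum_V0_trace tr_rho1_mul -scaleNr tensmxZl mulNr opprK.
under eq_bigr do under eq_bigr do rewrite termE.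
rewrite (eq_bigr (fun k => (1/2) *: (P0 *t (sigma k *m sigma k)))); last first.
  move=> k _; rewrite (bigD1 k) //= eqxx big1 ?addr0 // => m.
  by rewrite eq_sym => /negPf ->; rewrite mul0r scale0r.
under eq_bigr do rewrite sigma_sq tensmxNr scalerN.
rewrite sum_ord3 /emb; move: (P0 *t _) => Z.
by apply/matrixP => i j; rewrite !mxE; field.
Qed.

Definition oneform_P0 l : seq (Apair N) :=
  [seq (hop01 (delta_mx 0 x), hop10 (delta_mx x 0) (rho 1 l)) | x <- index_enum 'I_2].

Lemma rep1_oneform_P0 l : rep1 (oneform_P0 l) = (-1/2) *: (P0 *t sigma l).
Proof.
rewrite /rep1 big_map; under eq_bigr do rewrite emb_hop_comm.
rewrite exchange_big (eq_bigr (fun k => (- (k == l)%:R / 2) *: (P0 *t sigma k))).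
  rewrite (bigD1 l) //= eqxx big1 ?addr0 // => k /negPf ->.
  by rewrite oppr0 mul0r scale0r.
move=> k _; rewrite -tensmx_suml; under eq_bigr do rewrite -(mulmxA (delta_mx 0 _)).
by rewrite sum_V0_trace tr_rho1_mul tensmxZl.
Qed.

End LowSpins.

Section Generation.
Variable M : nat.
Local Notation N := M.+1.

(* Since [P0] has rank one, every [a] is a sum of products [a_u P0 b_u]. *)
Lemma emb_P0_generates (Pr : op N -> Prop) (Y : op N) :
  Pr 0 -> (forall x y, Pr x -> Pr y -> Pr (x + y)) ->
  (forall a x, Pr x -> Pr (emb a *m x)) -> (forall x b, Pr x -> Pr (x *m emb b)) ->
  (forall a, emb a *m Y = Y *m emb a) ->
  Pr (emb (P0 M) *m Y) -> forall a, Pr (emb a *m Y).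
Proof.
move=> Pr0 PrD Prl Prr Ycomm PrP0 a.
pose w (u : 'I_(Kdim N)) : 'cV[C]_(Kdim N) := delta_mx u 0.
have aE : a = \sum_u (a *m w u *m (V0 M)^T) *m P0 M *m (V0 M *m (w u)^T).
  rewrite -[a in LHS]mulmx1 mx1_sum_delta mulmx_sumr; apply: eq_bigr => u _.
  rewrite /P0 !mulmxA -[_ *m (V0 M)^T *m V0 M]mulmxA V0K mulmx1.
  rewrite -[_ *m (V0 M)^T *m V0 M]mulmxA V0K mulmx1 -mulmxA.
  by rewrite /w trmx_delta mul_delta_mx.
rewrite aE emb_sum mulmx_suml; elim/big_ind: _ => // u _.
rewrite !embM -!mulmxA Ycomm !mulmxA; apply: Prr; rewrite -mulmxA; exact: Prl.
Qed.

Lemma J2_emb a : J2 (emb a : op N).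
Proof.
have J2P0 : J2 (emb (P0 M) *m 1%:M).
  have : J2 ((-3/2) *: emb (P0 M)).
    by exists (junk_P0 M); rewrite rep1_junk_P0 drep_junk_P0.
  move=> /(J2Z (-2/3)).
  by rewrite scalerA mulmx1 (_ : -2/3 * (-3/2) = 1) ?scale1r //; field.
rewrite -[emb a]mulmx1; apply: (emb_P0_generates (@J2_0 N) (@J2D N)) => //.
- exact: J2_mull.
- exact: J2_mulr.
- by move=> c; rewrite mulmx1 mul1mx.
Qed.

Lemma Omega1_e l : Omega1 (e N l).
Proof.
have emb_e a : emb a *m e N l = a *t sigma l.
  by rewrite /emb /e tensmx_mul mulmx1 mul1mx.
have O1P0 : Omega1 (emb (P0 M) *m e N l).
  have : Omega1 ((-1/2) *: (P0 M *t sigma l)).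
    by exists (oneform_P0 M l); rewrite rep1_oneform_P0.
  move=> /(Omega1Z (-2)).
  by rewrite scalerA emb_e (_ : -2 * (-1/2) = 1) ?scale1r //; field.
rewrite -[e N l]mul1mx -emb1.
apply: (emb_P0_generates (@Omega1_0 N) (@Omega1D N)) => //.
- exact: Omega1_mull.
- exact: Omega1_mulr.
- by move=> c; rewrite emb_e /emb /e tensmx_mul mulmx1 mul1mx.
Qed.

End Generation.

(* 1, sigma_1, sigma_2, sigma_3 form a basis of 'M_2 and multiply like
   quaternion units. *)
Section Quaternions.
Implicit Types (s t a : C) (c d : 'I_3 -> C).

Definition quat s c : 'M[C]_2 := s%:M + \sum_l c l *: sigma l.

Lemma quat_mul s c t d : quat s c *m quat t d =
  quat (s * t - \sum_l c l * d l)
       (fun n => s * d n + t * c n - \sum_l \sum_m c l * d m * eps l m n).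
Proof. by rewrite /quat !sum_ord3; mx2_entrywise. Qed.

Lemma quatD s c t d : quat s c + quat t d = quat (s + t) (fun n => c n + d n).
Proof.
rewrite /quat raddfD addrACA -big_split; congr (_ + _).
by apply: eq_bigr => n _; rewrite scalerDl.
Qed.

Lemma quatZ a s c : a *: quat s c = quat (a * s) (fun n => a * c n).
Proof.
rewrite /quat scalerDr scale_scalar_mx scaler_sumr; congr (_ + _).
by apply: eq_bigr => n _; rewrite scalerA.
Qed.

Lemma quat_sum I (r : seq I) (P : pred I) (S : I -> C) (F : I -> 'I_3 -> C) :
  \sum_(i <- r | P i) quat (S i) (F i) =
  quat (\sum_(i <- r | P i) S i) (fun n => \sum_(i <- r | P i) F i n).
Proof.
rewrite /quat big_split raddf_sum exchange_big; congr (_ + _).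
by apply: eq_bigr => n _; rewrite scaler_suml.
Qed.

Lemma quat_scalar s : s%:M = quat s (fun=> 0).
Proof. by rewrite /quat big1 ?addr0 // => l _; rewrite scale0r. Qed.

Lemma quat_sigma k : sigma k = quat 0 (fun n => (k == n)%:R).
Proof.
rewrite /quat raddf0 add0r (bigD1 k) //= eqxx scale1r big1 ?addr0 // => n.
by rewrite eq_sym => /negPf ->; rewrite scale0r.
Qed.

Lemma eq_quat s t c d : s = t -> (forall n, c n = d n) -> quat s c = quat t d.
Proof. by move=> -> cd; congr (_ + _); apply: eq_bigr => n _; rewrite cd. Qed.

End Quaternions.

Ltac eps_sums := rewrite !sum_ord3 /eps /=; field.

Definition omega_symbol (a b : 'I_3) : 'M[C]_2 := (-1/2) *: \sum_l eps a b l *: sigma l.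
Definition f_symbol (q : 'I_3) : 'M[C]_2 :=
  (1/2) *: \sum_(j < 3) \sum_(k < 3) eps q j k *: (sigma j *m sigma k).

Lemma omega_symbol_quat a b : omega_symbol a b = quat 0 (fun l => -1/2 * eps a b l).
Proof.
rewrite /omega_symbol /quat raddf0 add0r scaler_sumr.
by apply: eq_bigr => l _; rewrite scalerA.
Qed.

Lemma f_symbol_quat q : f_symbol q = quat 0 (fun n => - (q == n)%:R).
Proof.
rewrite /f_symbol; under eq_bigr do under eq_bigr do rewrite !quat_sigma quat_mul quatZ.
under eq_bigr do rewrite quat_sum.
rewrite quat_sum quatZ; apply: eq_quat => [|n].
  by case: q => [[|[|[|//]]] ?]; eps_sums.
by case: q => [[|[|[|//]]] ?]; case: n => [[|[|[|//]]] ?]; eps_sums.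
Qed.

Lemma curvature_symbol j p :
  \sum_k omega_symbol p k *m omega_symbol k j + omega_symbol p j =
  (-1/4) *: \sum_q eps j p q *: f_symbol q + ((p == j)%:R / 2)%:M.
Proof.
under eq_bigr do rewrite !omega_symbol_quat quat_mul.
under [in RHS]eq_bigr do rewrite f_symbol_quat quatZ.
rewrite quat_sum omega_symbol_quat quatD quat_sum quatZ quat_scalar quatD.
apply: eq_quat => [|n].
  by case: j => [[|[|[|//]]] ?]; case: p => [[|[|[|//]]] ?]; eps_sums.
by case: j => [[|[|[|//]]] ?]; case: p => [[|[|[|//]]] ?]; case: n => [[|[|[|//]]] ?];
  eps_sums.
Qed.

Lemma wedge_symbol j p :
  (-1/4) *: \sum_q eps j p q *: f_symbol q =
  (1/4) *: (sigma p *m sigma j) + ((p == j)%:R / 4)%:M.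
Proof.
under eq_bigr do rewrite f_symbol_quat quatZ.
rewrite quat_sum quatZ !quat_sigma quat_mul quatZ quat_scalar quatD.
apply: eq_quat => [|n].
  by case: j => [[|[|[|//]]] ?]; case: p => [[|[|[|//]]] ?]; eps_sums.
by case: j => [[|[|[|//]]] ?]; case: p => [[|[|[|//]]] ?]; case: n => [[|[|[|//]]] ?];
  eps_sums.
Qed.

Lemma mx2E (R : Type) (A : 'M[R]_2) : A = \matrix_(i, j)
  if val i == 0%N then (if val j == 0%N then A 0 0 else A 0 1)
  else (if val j == 0%N then A 1 0 else A 1 1).
Proof.
by apply/matrixP; case=> [[|[|//]] ?]; case=> [[|[|//]] ?]; rewrite mxE /=;
  congr (A _ _); apply: val_inj.
Qed.

Lemma quat_decomp (A : 'M[C]_2) :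
  A = quat (\tr A / 2) (fun n => - \tr (A *m sigma n) / 2).
Proof.
move: (A 0 0) (A 0 1) (A 1 0) (A 1 1) (mx2E A) => a b c d ->.
rewrite /quat /mxtrace !sum_ord3; apply/matrixP; case=> [[|[|//]] ?]; case=> [[|[|//]] ?];
  rewrite ?(mxE, summxE, big_ord_recr, big_ord0) /= ?mxE /=; by field: (mulCii C).
Qed.

Section Spinor.
Variable N : nat.
Implicit Types A B : 'M[C]_2.

Definition spinor A : op N := (1%:M : 'M[C]_(Kdim N)) *t A.

Lemma spinorD A B : spinor (A + B) = spinor A + spinor B.
Proof. exact: tensmxDr. Qed.
Lemma spinorB A B : spinor (A - B) = spinor A - spinor B.
Proof. exact: tensmxBr. Qed.
Lemma spinorZ c A : spinor (c *: A) = c *: spinor A.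
Proof. exact: tensmxZr. Qed.
Lemma spinor_sum I (r : seq I) (P : pred I) (F : I -> 'M[C]_2) :
  spinor (\sum_(i <- r | P i) F i) = \sum_(i <- r | P i) spinor (F i).
Proof. exact: tensmx_sumr. Qed.
Lemma spinorM A B : spinor A *m spinor B = spinor (A *m B).
Proof. by rewrite /spinor tensmx_mul mulmx1. Qed.
Lemma spinor_scalar c : spinor c%:M = emb c%:M.
Proof.
have cE n : (c%:M : 'M[C]_n) = c *: 1%:M by rewrite scalemx1.
by rewrite /spinor /emb !cE tensmxZl tensmxZr.
Qed.

Lemma spinor_quat s c : spinor (quat s c) = emb s%:M + \sum_l c l *: e N l.
Proof.
rewrite /quat /spinor tensmxDr tensmx_sumr -/(spinor _) spinor_scalar.
by congr (_ + _); apply: eq_bigr => l _; rewrite tensmxZr.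
Qed.

Lemma omega_spinor a b : omega N a b = spinor (omega_symbol a b).
Proof.
rewrite /omega /omega_symbol spinorZ spinor_sum; congr (_ *: _).
by apply: eq_bigr => l _; rewrite spinorZ.
Qed.

Lemma f_spinor q : f N q = spinor (f_symbol q).
Proof.
rewrite /f /f_symbol spinorZ spinor_sum; congr (_ *: _); apply: eq_bigr => j _.
by rewrite spinor_sum; apply: eq_bigr => k _; rewrite spinorZ -spinorM.
Qed.

Lemma curv_spinor j p :
  curv N j p = spinor (\sum_k omega_symbol p k *m omega_symbol k j) + d1 (omega N p j).
Proof.
rewrite /curv big_split /= spinor_sum; congr (_ + _).
  by apply: eq_bigr => k _; rewrite /wedge /nabla !omega_spinor spinorM.
by rewrite -big_mkcond big_pred1_eq.
Qed.

End Spinor.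

Lemma Dirac_e_anticomm N l :
  Dirac N *m e N l + e N l *m Dirac N = emb ((-2) *: X N l).
Proof.
rewrite /Dirac /e mulmx_suml mulmx_sumr -big_split /=.
rewrite (eq_bigr (fun k => emb ((-2 * (k == l)%:R) *: X N k))) => [|k _]; last first.
  by rewrite !tensmx_mul mulmx1 mul1mx -tensmxDr sigma_anticomm tensmxZr -embZ.
rewrite -emb_sum (bigD1 l) //= eqxx mulr1 big1 ?addr0 // => k /negPf ->.
by rewrite mulr0 scale0r.
Qed.

Section Differential.
Variable M : nat.
Local Notation N := M.+1.
Implicit Types x : op N.

Lemma d1_sub_J2 x : Omega1 x -> J2 (d1 x - (Dirac N *m x + x *m Dirac N + x)).
Proof.
move=> /d1P [s [-> ->]]; rewrite drep_Dirac.
by rewrite addrAC subrr add0r; apply/J2N/J2_emb.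
Qed.

Lemma d1_J2 x : Omega1 x -> J2 (Dirac N *m x + x *m Dirac N) -> J2 (d1 x - x).
Proof.
move=> /d1_sub_J2 h1 h2.
have splitE (u a : op N) : u - x = u - (a + x) + a by rewrite opprD addrA addrAC subrK.
by rewrite (splitE _ (Dirac N *m x + x *m Dirac N)); apply: J2D.
Qed.

Lemma Sspace_d1 x : Omega1 x -> Sspace (d1 x).
Proof. by move=> /d1P [s [_ ->]]; apply: Sspace_drep. Qed.

Lemma Sspace_e l : Sspace (e N l).
Proof.
have eJ2 : J2 (d1 (e N l) - e N l).
  by apply: d1_J2 (Omega1_e M l) _; rewrite Dirac_e_anticomm; apply: J2_emb.
have -> : e N l = d1 (e N l) - (d1 (e N l) - e N l) by rewrite opprB addrC subrK.
apply: SspaceD.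
  exact: Sspace_d1 (Omega1_e M l).
by apply: SspaceN; apply: Sspace_J2.
Qed.

Lemma Sspace_spinor A : Sspace (spinor N A).
Proof.
rewrite (quat_decomp A) spinor_quat; apply: SspaceD.
  exact/Sspace_J2/J2_emb.
by apply: Sspace_sum => l _; apply/SspaceZ/Sspace_e.
Qed.

Lemma J2_spinor_scalar c : J2 (spinor N c%:M).
Proof. by rewrite spinor_scalar; apply: J2_emb. Qed.

Lemma Omega1_omega a b : Omega1 (omega N a b).
Proof.
by apply/Omega1Z/Omega1_sum => l _; apply/Omega1Z/Omega1_e.
Qed.

Lemma d1_omega a b : J2 (d1 (omega N a b) - omega N a b).
Proof.
apply: d1_J2 (Omega1_omega a b) _.
rewrite /omega -scalemxAr -scalemxAl -scalerDr mulmx_sumr mulmx_suml -big_split.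
apply/J2Z/J2_sum => l _ /=.
by rewrite -scalemxAr -scalemxAl -scalerDr Dirac_e_anticomm; apply/J2Z/J2_emb.
Qed.

End Differential.

Lemma curvature_mod_J2 M j p :
  J2 (curv M.+1 j p - spinor M.+1 ((-1/4) *: \sum_q eps j p q *: f_symbol q)).
Proof.
have WE : \sum_k omega_symbol p k *m omega_symbol k j =
    (-1/4) *: \sum_q eps j p q *: f_symbol q + ((p == j)%:R / 2)%:M - omega_symbol p j.
  by rewrite -curvature_symbol addrK.
have regroup (a s w d : op M.+1) : a + s - w + d - a = s + (d - w).
  by rewrite addrC !addrA addNr add0r addrAC -addrA.
rewrite curv_spinor WE !spinorB spinorD -omega_spinor regroup.
by apply: J2D; [apply: J2_spinor_scalar | apply: d1_omega].
Qed.

Lemma wedge_mod_J2 M j p :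
  J2 (spinor M.+1 ((-1/4) *: \sum_q eps j p q *: f_symbol q)
      - (1/4) *: wedge (e M.+1 p) (e M.+1 j)).
Proof.
by rewrite /wedge /e -/(spinor _ _) spinorM -spinorZ -spinorB wedge_symbol addrC addKr;
  apply: J2_spinor_scalar.
Qed.

Theorem proposition8p8 (N : nat) (hN : (1 <= N)%N) (j : 'I_3) :
  (forall p : 'I_3,
     eq2 (curv N j p) ((- 1 / 4) *: \sum_(q < 3) (eps j p q *: f N q))) /\
  (forall p : 'I_3,
     eq2 ((- 1 / 4) *: \sum_(q < 3) (eps j p q *: f N q))
         ((1 / 4) *: wedge (e N p) (e N j))).
Proof.
case: N hN => [//|M] _.
have rhsE p : (- 1 / 4) *: \sum_(q < 3) (eps j p q *: f M.+1 q) =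
    spinor M.+1 ((-1/4) *: \sum_q eps j p q *: f_symbol q).
  rewrite spinorZ spinor_sum; congr (_ *: _).
  by apply: eq_bigr => q _; rewrite spinorZ f_spinor.
split=> p; rewrite rhsE.
  split; last by split; [apply: Sspace_spinor | apply: curvature_mod_J2].
  rewrite curv_spinor; apply: SspaceD; first exact: Sspace_spinor.
  exact: Sspace_d1 (Omega1_omega M p j).
split; first exact: Sspace_spinor.
split; last exact: wedge_mod_J2.
by rewrite /wedge /e -/(spinor _ _) spinorM -spinorZ; apply: Sspace_spinor.
Qed.
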